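(* Fix $a\in(0,1/2)$ and $b\in(0,1)$. There exist constants $c_1>0$ and $c_2>0$ (independent of $n$) such that for all sufficiently large $n$, the random-neighbor variant process on the complete graph $K_n$ with root $r$ satisfies $\Pr[\tau_{\mathrm{conv}}\ge c_2n]\ge c_1a$.
   Context: Random-neighbor variant. Fix $a,b\in[0,1]$, a connected graph $G=(V,E)$ and a root $r$. Labels $f_t:V\to\{+1,-1,\bot\}$ with $f_t(r)=+1$ for all $t$ and $f_0(v)=\bot$ for $v\ne r$. For $t\ge1$ and each $v\neq r$ independently, let $N_{t-1}(v)=\{u:(u,v)\in E,\ f_{t-1}(u)\ne\bot\}$. If $f_{t-1}(v)=\bot$ and $N_{t-1}(v)=\emptyset$, then $f_t(v)=\bot$. If $f_{t-1}(v)=\bot$ and $N_{t-1}(v)\neq\emptyset$, pick $w$ uniformly from $N_{t-1}(v)$ and set $f_t(v)=f_{t-1}(w)$ w.p. $1-a$ and $-f_{t-1}(w)$ w.p. $a$. If $f_{t-1}(v)\ne\bot$, pick $w$ uniformly at random from $N_{t-1}(v)$ (afresh every round) and set $f_t(v)=f_{t-1}(w)$ w.p. $b$ and $f_t(v)=f_{t-1}(v)$ w.p. $1-b$. The convergence time is $\tau_{\mathrm{conv}}=\min\{t: f_t(v)=+1\ \forall v\in V\}$. *)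

From HB Require Import structures.
From mathcomp Require Import all_boot all_order all_algebra.
From mathcomp Require Import reals.
Set Implicit Arguments. Unset Strict Implicit. Unset Printing Implicit Defensive.
Import Order.TTheory GRing.Theory Num.Theory.
Local Open Scope ring_scope.

(* Labels: [None] = ⊥ (unlabelled), [Some true] = +1, [Some false] = -1. *)
Definition label := option bool.
Definition lneg (l : label) : label := omap negb l.

Section RandomNeighbor.
Variables (R : realType) (a b : R).
Variables (V : finType) (adj : rel V) (r : V).

Definition state := {ffun V -> label}.

Definition nbrs (f : state) (v : V) : {set V} := [set u | adj u v & f u != None].

(* Root: always +1.  Otherwise:
   - N empty: label unchanged (f_{t-1}(v)=⊥ gives ⊥; a labelled vertex with
     empty labelled neighbourhood cannot occur, we let it keep its label);
   - f(v)=⊥: w uniform in N, copy f(w) w.p. 1-a, flip it w.p. a;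
   - f(v)≠⊥: w uniform in N, adopt f(w) w.p. b, keep f(v) w.p. 1-b. *)
Definition vertex_prob (f : state) (v : V) (l : label) : R :=
  if v == r then (l == Some true)%:R else
  let N := nbrs f v in
  if #|N| == 0%N then (l == f v)%:R else
  match f v with
  | None => \sum_(w in N) #|N|%:R^-1 *
              ((1 - a) * (l == f w)%:R + a * (l == lneg (f w))%:R)
  | Some _ => \sum_(w in N) #|N|%:R^-1 *
              (b * (l == f w)%:R + (1 - b) * (l == f v)%:R)
  end.

Definition trans (f g : state) : R := \prod_(v : V) vertex_prob f v (g v).

Definition init_state : state := [ffun v => if v == r then Some true else None].

Definition all_plus (f : state) : bool := [forall v, f v == Some true].

(* surv T g = Pr[ f_T = g  and  f_t is not all +1 for every t < T ]. *)
Fixpoint surv (T : nat) : {ffun state -> R} :=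
  match T with
  | 0%N => [ffun g => (g == init_state)%:R]
  | T'.+1 => [ffun g => \sum_(f : state | ~~ all_plus f) surv T' f * trans f g]
  end.

(* Pr[ tau_conv >= T ] for a natural T  (tau_conv = min{t : f_t all +1},
   = +oo if no such t): sum over g of surv T g. *)
Definition prob_tau_ge_nat (T : nat) : R := \sum_(g : state) surv T g.

(* Pr[ tau_conv >= x ] for a real threshold x: tau_conv is an integer, so
   the event is tau_conv >= ceil(x) (and is sure when x <= 0). *)
Definition prob_tau_ge (x : R) : R :=
  if x <= 0 then 1 else prob_tau_ge_nat `|Num.ceil x|%N.

End RandomNeighbor.

Definition complete_adj (n : nat) : rel 'I_n := fun u v => u != v.

From HB Require Import structures.
From mathcomp Require Import all_boot all_order all_algebra.
From mathcomp Require Import reals.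
From mathcomp Require Import ring lra.
Set Implicit Arguments. Unset Strict Implicit. Unset Printing Implicit Defensive.
Import Order.TTheory GRing.Theory Num.Theory.
Local Open Scope ring_scope.

(* Follow the expected number of (-1)-labelled vertices along
   the surviving runs, [expected_minus T = E[#{v : f_T v = -1}; tau >= T]].
   On K_n with n = m+1:
   - after one step every non-root vertex carries a label (the root is a
     labelled neighbour of everybody), and each is -1 with probability a,
     so [expected_minus 1 = a m];
   - from a fully labelled state with M minus signs, a -1 vertex keeps its
     label unless it adopts (prob. b) the label of a uniform other vertex,
     and a +1 vertex becomes -1 when it adopts a -1 neighbour; summing
     gives an expectation of exactly (1 - b/m) M at the next step;
   - hence [expected_minus T.+1 = a m (1 - b/m)^T >= a m (1 - T b/m)]
     (Bernoulli's inequality);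
   - at most n vertices are -1, so [expected_minus T <= n Pr[tau >= T]]. *)

Lemma bernoulli_le (R : realFieldType) (q : R) (T : nat) :
  0 <= q <= 1 -> 1 - T%:R * q <= (1 - q) ^+ T.
Proof.
move=> /andP[q0 q1]; elim: T => [|T IH]; first by rewrite mul0r subr0 expr0.
rewrite exprS -natr1; apply: le_trans (ler_wpM2l _ IH); last by rewrite subr_ge0.
have : 0 <= T%:R * q * q by rewrite !mulr_ge0.
nra.
Qed.

Lemma sum_label (R : nmodType) (F : label -> R) :
  \sum_(l : label) F l = F None + F (Some true) + F (Some false).
Proof.
rewrite (bigD1 None) // (bigD1 (Some true)) // (bigD1 (Some false)) //= big1.
  by rewrite addr0 !addrA.
by case=> [[]|].
Qed.

Lemma sum_label_eq1 (R : pzSemiRingType) (x : label) :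
  \sum_(l : label) ((l == x)%:R : R) = 1.
Proof. by rewrite sum_label; case: x => [[]|] /=; rewrite ?addr0 ?add0r. Qed.

Lemma sum_label_mix (R : pzSemiRingType) (c d : R) (x y : label) :
  \sum_(l : label) (c * (l == x)%:R + d * (l == y)%:R) = c + d.
Proof. by rewrite big_split /= -!mulr_sumr !sum_label_eq1 !mulr1. Qed.

Definition n_minus {R : realType} {V : finType} (f : state V) : R :=
  \sum_v (f v == Some false)%:R.

Section AnyGraph.
Variables (R : realType) (a b : R) (V : finType) (adj : rel V) (r : V).
Implicit Types (f g : state V) (v : V).

Local Notation vp := (vertex_prob a b adj r).
Local Notation tr := (trans a b adj r).
Local Notation sv := (surv a b adj r).

Lemma vertex_prob_sum1 f v : \sum_l vp f v l = 1.
Proof.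
rewrite /vertex_prob; case: (v == r); first exact: sum_label_eq1.
set N := nbrs adj f v; case hN: (#|N| == 0%N); first exact: sum_label_eq1.
have uniform (F : V -> label -> R) : (forall w, \sum_l F w l = 1) ->
    \sum_l \sum_(w in N) #|N|%:R^-1 * F w l = 1.
  move=> F1; rewrite exchange_big /=.
  under eq_bigr => w _ do rewrite -mulr_sumr F1 mulr1.
  by rewrite sumr_const -[LHS]mulr_natr mulVf // pnatr_eq0 hN.
by case: (f v) => [s|]; apply: uniform => w; rewrite sum_label_mix ?subrK // addrC subrK.
Qed.

Lemma trans_marginal f u x : \sum_g tr f g * (g u == x)%:R = vp f u x.
Proof.
pose F v l := if v == u then vp f v l * (l == x)%:R else vp f v l.
have prodF g : tr f g * (g u == x)%:R = \prod_v F v (g v).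
  rewrite /trans (bigD1 u) //= [RHS](bigD1 u) //= /F eqxx mulrAC; congr (_ * _).
  by apply: eq_bigr => v /negbTE ->.
rewrite (eq_bigr _ (fun g _ => prodF g)) -(bigA_distr_bigA F) (bigD1 u) //=.
rewrite [X in _ * X]big1 => [|v /negbTE hv]; last by rewrite /F hv vertex_prob_sum1.
rewrite mulr1 /F eqxx (bigD1 x) //= eqxx mulr1 big1 ?addr0 // => l /negbTE ->.
by rewrite mulr0.
Qed.

Lemma trans_expect_minus f :
  \sum_g tr f g * n_minus g = \sum_v vp f v (Some false).
Proof.
under eq_bigr => g _ do rewrite /n_minus mulr_sumr /=.
by rewrite exchange_big /=; apply: eq_bigr => v _; exact: trans_marginal.
Qed.

Definition expected_minus T := \sum_g sv T g * n_minus g.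

Lemma expected_minus_step T :
  expected_minus T.+1 =
  \sum_(f | ~~ all_plus f) sv T f * \sum_v vp f v (Some false).
Proof.
rewrite /expected_minus; under eq_bigr => g _ do rewrite ffunE mulr_suml.
rewrite exchange_big /=; apply: eq_bigr => f _.
rewrite -trans_expect_minus mulr_sumr; by apply: eq_bigr => g _; rewrite mulrA.
Qed.

Lemma trans_root0 f g :
  g r != Some true -> trans a b adj r f g = 0.
Proof.
by move=> /negbTE hr; rewrite /trans (bigD1 r) //= /vertex_prob eqxx hr mul0r.
Qed.

Lemma prob_tau_ge_pos (x : R) : 0 < x ->
  exists T : nat, T%:R < x /\ prob_tau_ge a b adj r x = prob_tau_ge_nat a b adj r T.+1.
Proof.
move=> x0; rewrite /prob_tau_ge leNgt x0 /=.
have : 0 < Num.ceil x by rewrite ceil_gt0.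
have := ceil_itv x; case: (Num.ceil x) => [[|T]|//] // /andP[hT _] _.
by exists T; split=> //; move: hT; rewrite -[T.+1]addn1 PoszD addrK.
Qed.

Hypotheses (a0 : 0 <= a) (a1 : a <= 1) (b0 : 0 <= b) (b1 : b <= 1).

Lemma vertex_prob_ge0 f v l : 0 <= vp f v l.
Proof.
rewrite /vertex_prob; case: (v == r) => //; case: (#|nbrs adj f v| == 0%N) => //.
by case: (f v) => [s|]; apply: sumr_ge0 => w _;
  rewrite mulr_ge0 ?invr_ge0 ?addr_ge0 ?mulr_ge0 ?subr_ge0.
Qed.

Lemma surv_ge0 T g : 0 <= sv T g.
Proof.
elim: T g => [|T IH] g; rewrite ffunE //.
apply: sumr_ge0 => f _; rewrite mulr_ge0 ?IH //.
by apply: prodr_ge0 => v _; exact: vertex_prob_ge0.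
Qed.

(* Markov-type bound: at most #|V| vertices can carry a -1 label. *)
Lemma expected_minus_le T : expected_minus T <= #|V|%:R * prob_tau_ge_nat a b adj r T.
Proof.
rewrite /prob_tau_ge_nat mulr_sumr; apply: ler_sum => g _.
rewrite [_ * sv T g]mulrC; apply: ler_wpM2l; first exact: surv_ge0.
rewrite -sum1_card natr_sum; apply: ler_sum => v _.
by case: (_ == _).
Qed.

Lemma prob_tau_ge_nat_ge0 T : 0 <= prob_tau_ge_nat a b adj r T.
Proof. by apply: sumr_ge0 => g _; exact: surv_ge0. Qed.

End AnyGraph.

Section CompleteGraph.
Variables (R : realType) (a b : R) (m : nat) (r : 'I_m.+1).
Hypotheses (a0 : 0 <= a) (a1 : a <= 1) (b0 : 0 <= b) (b1 : b <= 1) (m0 : (0 < m)%N).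
Implicit Types (f g : state 'I_m.+1) (v : 'I_m.+1).

Local Notation adj := (@complete_adj m.+1).
Local Notation vp := (vertex_prob a b adj r).
Local Notation tr := (trans a b adj r).
Local Notation sv := (surv a b adj r).
Local Notation init := (init_state r).
Local Notation expected_minus := (expected_minus a b adj r).

(* Configurations reached from time 1 on: root +1, every vertex labelled. *)
Definition fully_labelled f :=
  (f r == Some true) && [forall v, f v != None].

(* In K_n the root is a labelled neighbour of every vertex, so no vertex
   can be (or stay) unlabelled. *)
Lemma vertex_prob_unlabelled f v : f r = Some true -> v != r -> vp f v None = 0.
Proof.
move=> fr hv.
have rN : r \in nbrs adj f v by rewrite inE /complete_adj eq_sym hv fr.
have N0 : (#|nbrs adj f v| == 0%N) = false.
  by apply/negbTE; rewrite -lt0n card_gt0; apply/set0Pn; exists r.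
rewrite /vertex_prob (negbTE hv) N0.
case: (f v) => [s|]; rewrite big1 // => w; rewrite inE => /andP[_];
  by case: (f w) => //= t _; rewrite !mulr0 ?addr0 mulr0.
Qed.

Lemma trans_not_fully_labelled f g :
  f r = Some true -> ~~ fully_labelled g -> tr f g = 0.
Proof.
move=> fr; rewrite negb_and => /orP[hr|/forallPn [v]]; first exact: trans_root0.
rewrite negbK => /eqP gv; case: (eqVneq v r) => [<-|hv].
  by apply: trans_root0; rewrite gv.
by rewrite /trans (bigD1 v) //= gv vertex_prob_unlabelled // mul0r.
Qed.

Lemma surv_not_fully_labelled T g : ~~ fully_labelled g -> sv T.+1 g = 0.
Proof.
move=> hg; rewrite ffunE big1 // => f _.
case: (eqVneq (f r) (Some true)) => [fr|fr].
  by rewrite trans_not_fully_labelled // mulr0.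
case: T => [|T]; last by rewrite ffunE big1 ?mul0r // => h _; rewrite trans_root0 ?mulr0.
by rewrite ffunE; case: eqP => [fi|_]; [rewrite fi ffunE eqxx in fr|rewrite mul0r].
Qed.

(* From f_0 every non-root vertex copies the root and flips w.p. a. *)
Lemma init_expect_minus : \sum_v vp init v (Some false) = a * m%:R.
Proof.
rewrite (bigD1 r) //= {1}/vertex_prob eqxx add0r.
rewrite (eq_bigr (fun _ => a)) => [|v hv].
  by rewrite sumr_const cardC1 card_ord mulr_natr.
have Nv : nbrs adj init v = [set r].
  apply/setP => u; rewrite !inE /complete_adj ffunE.
  by case: (eqVneq u r) => [->|] /=; rewrite ?andbF // eq_sym hv.
rewrite /vertex_prob (negbTE hv) Nv cards1 /= ffunE (negbTE hv) big_set1 ffunE eqxx /=.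
by rewrite invr1 mul1r mulr0 add0r mulr1.
Qed.

Lemma n_minus_others f v :
  \sum_(w in [set~ v]) (f w == Some false)%:R = n_minus f - (f v == Some false)%:R :> R.
Proof.
by rewrite /n_minus [in RHS](bigD1 v) //= addrC addrK; apply: eq_bigl => w; rewrite !inE.
Qed.

(* A labelled non-root vertex of a fully labelled configuration becomes -1
   by adopting a -1 among its m neighbours (prob. b), or by keeping its own
   -1 label (prob. 1 - b). *)
Lemma vertex_prob_minus f v : fully_labelled f -> v != r ->
  vp f v (Some false) =
  b / m%:R * (n_minus f - (f v == Some false)%:R) + (1 - b) * (f v == Some false)%:R.
Proof.
case/andP=> _ /forallP hall hv; have mR : m%:R != 0 :> R by rewrite pnatr_eq0 -lt0n.
have Nv : nbrs adj f v = [set~ v].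
  by apply/setP => u; rewrite !inE /complete_adj (hall u) andbT.
rewrite /vertex_prob (negbTE hv) Nv cardsC1 card_ord /= (negbTE (lt0n_neq0 m0)).
have := hall v; case fv: (f v) => [s|] // _; rewrite -fv.
under eq_bigr => w _ do rewrite !(eq_sym (Some false)) mulrDr mulrA.
rewrite big_split /= -!mulr_sumr n_minus_others sumr_const cardsC1 card_ord.
by rewrite -mulr_natr; field.
Qed.

Lemma fully_labelled_expect_minus f : fully_labelled f ->
  \sum_v vp f v (Some false) = (1 - b / m%:R) * n_minus f.
Proof.
move=> hf; have mR : m%:R != 0 :> R by rewrite pnatr_eq0 -lt0n.
have fr : f r = Some true by case/andP: hf => /eqP.
have nr : n_minus f = \sum_(v | v != r) (f v == Some false)%:R :> R.
  by rewrite /n_minus (bigD1 r) //= fr add0r.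
rewrite (bigD1 r) //= {1}/vertex_prob eqxx /= add0r.
rewrite (eq_bigr _ (fun v => vertex_prob_minus hf)).
rewrite big_split /= -!mulr_sumr sumrB sumr_const -nr cardC1 card_ord.
by rewrite -mulr_natr; field.
Qed.

(* The process is not yet converged at time 0 since m > 0. *)
Lemma expected_minus1 : expected_minus 1 = a * m%:R.
Proof.
have [w hw] : exists w : 'I_m.+1, w != r.
  case: (eqVneq r ord0) => [->|h]; last by exists ord0; rewrite eq_sym.
  by exists ord_max; rewrite -(inj_eq val_inj) /= -lt0n.
have ni : ~~ all_plus init by apply/forallP => /(_ w); rewrite ffunE (negbTE hw).
rewrite expected_minus_step (bigD1 init) //= ffunE eqxx mul1r init_expect_minus.
by rewrite big1 ?addr0 // => f /andP[_ hf]; rewrite ffunE (negbTE hf) mul0r.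
Qed.

(* Converged configurations carry no -1 label, so discarding them is free. *)
Lemma expected_minus_rec T : expected_minus T.+2 = (1 - b / m%:R) * expected_minus T.+1.
Proof.
rewrite expected_minus_step /expected_minus [in RHS](bigID (@all_plus _)) /=.
rewrite [in RHS]big1 ?add0r => [|f /forallP fplus]; last first.
  by rewrite /n_minus big1 ?mulr0 // => v _; rewrite (eqP (fplus v)).
rewrite mulr_sumr; apply: eq_bigr => f _.
case hf: (fully_labelled f); first by rewrite fully_labelled_expect_minus // mulrCA.
by rewrite surv_not_fully_labelled ?hf // !mul0r mulr0.
Qed.

Lemma expected_minus_closed T : expected_minus T.+1 = a * m%:R * (1 - b / m%:R) ^+ T.
Proof.
elim: T => [|T IH]; first by rewrite expected_minus1 mulr1.
by rewrite expected_minus_rec IH exprS mulrCA.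
Qed.

Lemma tail_lower_bound T :
  a * m%:R * (1 - T%:R * (b / m%:R)) <= m.+1%:R * prob_tau_ge_nat a b adj r T.+1.
Proof.
have := expected_minus_le adj r a0 a1 b0 b1 T.+1; rewrite card_ord; apply: le_trans.
rewrite expected_minus_closed ler_wpM2l ?mulr_ge0 // bernoulli_le //.
have m1 : 1 <= m%:R :> R by rewrite ler1n.
by rewrite divr_ge0 //= ler_pdivrMr ?mul1r ?(le_trans b1) // (lt_le_trans ltr01).
Qed.

(* With T < n/4 the tail probability is at least a/4: then T b / m <= 1/2,
   so a m / 2 <= (m+1) Pr[tau >= T+1], and m / (m+1) >= 1/2. *)
Lemma tail_quarter T : T%:R < 4^-1 * m.+1%:R :> R ->
  4^-1 * a <= prob_tau_ge_nat a b adj r T.+1.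
Proof.
move=> Tx; have bound := tail_lower_bound T.
have P0 := prob_tau_ge_nat_ge0 adj r a0 a1 b0 b1 T.+1.
set P := prob_tau_ge_nat _ _ _ _ _ in P0 bound *.
rewrite -[m.+1%:R]natr1 in Tx bound.
have m1 : 1 <= m%:R :> R by rewrite ler1n.
have hq : T%:R * (b / m%:R) <= 2^-1.
  rewrite mulrA ler_pdivrMr ?(lt_le_trans ltr01) //.
  have : T%:R * b <= T%:R by rewrite ler_piMr.
  lra.
have am0 : 0 <= a * m%:R by rewrite mulr_ge0.
have : a * m%:R * 2^-1 <= (m%:R + 1) * P by apply: le_trans bound; nra.
nra.
Qed.

End CompleteGraph.

Theorem mainTheorem17 (R : realType) (a b : R) :
  0 < a < 2^-1 -> 0 < b < 1 ->
  exists c1 c2 : R, 0 < c1 /\ 0 < c2 /\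
    exists N : nat, forall n : nat, (N <= n)%N -> forall r : 'I_n,
      c1 * a <= prob_tau_ge a b (@complete_adj n) r (c2 * n%:R).
Proof.
move=> /andP[a0 a2] /andP[b0 b1].
have a1 : a <= 1 by apply: le_trans (ltW a2) _; rewrite invf_le1 // ler1n.
have q0 : 0 < 4^-1 :> R by rewrite invr_gt0.
exists 4^-1, 4^-1; do 2!split=> //.
exists 2%N => -[//|m]; rewrite ltnS => m0 r.
have [|T [Tx ->]] := prob_tau_ge_pos a b (complete_adj (n:=m.+1)) r (x:=4^-1 * m.+1%:R).
  by rewrite mulr_gt0.
exact: tail_quarter (ltW a0) a1 (ltW b0) (ltW b1) m0 T Tx.
Qed.
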